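(* Let $\mathcal M$ be a non-empty compact, locally connected Hausdorff space, $\vec\varphi:\mathcal M\to\mathbb R^k$ continuous, and $\vec y=(y_1,\dots,y_k)\in\mathbb R^k$. If $P,Q\in\mathcal M$ are $\langle\vec\varphi\preceq(y_1+\varepsilon,\dots,y_k+\varepsilon)\rangle$-connected for every $\varepsilon>0$, then $P$ and $Q$ are $\langle\vec\varphi\preceq\vec y\rangle$-connected.
   Context: For $\vec t\in\mathbb R^k$, $\mathcal M\langle\vec\varphi\preceq\vec t\rangle=\{P\in\mathcal M:\varphi_i(P)\le t_i,\ i=1,\dots,k\}$. Two points $P,Q\in\mathcal M$ are $\langle\vec\varphi\preceq\vec t\rangle$-connected if some connected subset of $\mathcal M\langle\vec\varphi\preceq\vec t\rangle$ contains both $P$ and $Q$. *)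

From mathcomp Require Import all_boot all_algebra all_classical all_reals all_analysis.
Import numFieldNormedType.Exports.

Set Implicit Arguments.
Unset Strict Implicit.
Unset Printing Implicit Defensive.

Local Open Scope classical_set_scope.
Local Open Scope ring_scope.

Definition locally_connected_space (T : topologicalType) : Prop :=
  forall (x : T) (U : set T), nbhs x U ->
    exists V : set T, [/\ open V, V x, connected V & V `<=` U].

Definition sublevel (T : Type) (R : realType) (k : nat)
    (phi : T -> 'rV[R]_k) (t : 'rV[R]_k) : set T :=
  [set P | forall i : 'I_k, phi P ord0 i <= t ord0 i].

Definition sublevel_connected (T : topologicalType) (R : realType) (k : nat)
    (phi : T -> 'rV[R]_k) (t : 'rV[R]_k) (P Q : T) : Prop :=
  exists C : set T, [/\ connected C, C `<=` sublevel phi t, C P & C Q].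

From mathcomp Require Import all_boot all_algebra all_classical all_reals all_analysis.
Import numFieldNormedType.Exports.
Import order.Order.TTheory GRing.Theory Num.Theory.

Set Implicit Arguments.
Unset Strict Implicit.
Unset Printing Implicit Defensive.

Local Open Scope classical_set_scope.
Local Open Scope ring_scope.

(* Let K_e be the connected component of P in the closed set
   M<phi <= y + e>.  Each K_e contains Q, the K_e decrease with e, and their
   intersection lies in M<phi <= y>.  In a compact Hausdorff space a
   downward directed intersection of closed connected sets is connected: if
   it split into two separated pieces, normality would put them into
   disjoint open sets U and V; every K_e meets both pieces, so by
   connectedness leaves U \/ V, and compactness then yields a point outside
   U \/ V lying in every K_e, which is absurd. *)

Section directed_intersections.
Variable T : topologicalType.

Definition downward_directed (I : Type) (D : set I) (F : I -> set T) :=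
  forall i j, D i -> D j -> exists2 l, D l & F l `<=` F i `&` F j.

Lemma connected_componentS (A B : set T) (x : T) :
  A `<=` B -> connected_component A x `<=` connected_component B x.
Proof.
by move=> AB z [C [Cx CA Cc] Cz]; exists C => //; split => //; exact: subset_trans AB.
Qed.

Lemma separated_closedl (A B : set T) :
  separated A B -> closed (A `|` B) -> closed A.
Proof.
move=> [clAB _] clAuB; rewrite closure_id eqEsubset; split.
  exact: subset_closure.
move=> x clAx.
have : closure (A `|` B) x by apply: closureS clAx; exact: subsetUl.
rewrite -(closure_id _).1 // => -[//|Bx].
have : (closure A `&` B) x by [].
by rewrite clAB.
Qed.

Lemma open_disjoint_separated (U V : set T) :
  open U -> open V -> U `&` V = set0 -> separated U V.
Proof.
have closure_disjoint (A B : set T) :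
    open B -> A `&` B = set0 -> closure A `&` B = set0.
  move=> oB /disjoints_subset AB; apply/disjoints_subset.
  by rewrite ((closure_id _).1 (open_closedC oB)); exact: closureS.
move=> oU oV UV; split; first exact: closure_disjoint.
by rewrite setIC closure_disjoint // setIC.
Qed.

Lemma normal_open_separation (A B : set T) :
  normal_space T -> closed A -> closed B -> A `&` B = set0 ->
  exists U V : set T, [/\ open U, open V, A `<=` U, B `<=` V & U `&` V = set0].
Proof.
move=> nT clA clB /disjoints_subset AB.
have : set_nbhs A (~` B).
  by apply/set_nbhsP; exists (~` B); split => //; exact: closed_openC.
move=> /(nT _ clA) [N /set_nbhsP [U [oU AU UN]] clNB].
exists U, (~` closure N); split => //.
- exact/closed_openC/closed_closure.
- by move=> z Bz /clNB.
- by apply/disjoints_subset; rewrite setCK => z /UN; exact: subset_closure.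
Qed.

Lemma compact_directed_bigcap_neq0 (I : Type) (D : set I) (F : I -> set T) :
  compact [set: T] -> D !=set0 -> downward_directed D F ->
  (forall i, D i -> closed (F i)) -> (forall i, D i -> F i !=set0) ->
  \bigcap_(i in D) F i !=set0.
Proof.
move=> cT D0 dirF clF F0.
have FF : ProperFilter (filter_from D F).
  by apply: filter_from_proper => //; exact: filter_from_filter.
have [x [_ clx]] := cT _ FF filterT.
exists x => i Di; rewrite ((closure_id _).1 (clF i Di)).
by rewrite clusterE in clx; apply: clx; exists i.
Qed.

Lemma connected_bigcap_directed (I : Type) (D : set I) (K : I -> set T) :
  compact [set: T] -> hausdorff_space T -> D !=set0 -> downward_directed D K ->
  (forall i, D i -> closed (K i)) -> (forall i, D i -> connected (K i)) ->
  connected (\bigcap_(i in D) K i).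
Proof.
move=> cT hT D0 dirK clK cK; apply/connectedP => E [E0 KE sepE].
have clE b : closed (E b).
  have clEU : closed (E false `|` E true) by rewrite -KE; exact: closed_bigI.
  case: b; last exact: separated_closedl clEU.
  by rewrite setUC in clEU; apply: separated_closedl clEU; rewrite separatedC.
have [U [V [oU oV EU EV UV]]] := normal_open_separation
  (compact_normal hT cT) (clE false) (clE true) (separated_disjoint sepE).
have KUV : \bigcap_(i in D) K i `<=` U `|` V.
  by rewrite KE => z [/EU|/EV]; [left|right].
have K_UV i : D i -> K i `\` (U `|` V) !=set0.
  move=> Di; apply/set0P/negP => /eqP; rewrite setD_eq0 => KiUV.
  have [[a Ea] [b Eb]] := (E0 false, E0 true).
  have EKi : E false `|` E true `<=` K i by rewrite -KE => z /(_ i Di).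
  have [Kia Kib] : K i a /\ K i b by split; apply: EKi; [left|right].
  have [KiU|KiV] := connected_subset (open_disjoint_separated oU oV UV) KiUV (cK i Di).
  - have : (U `&` V) b by split; [exact: KiU | exact: EV].
    by rewrite UV.
  - have : (U `&` V) a by split; [exact: EU | exact: KiV].
    by rewrite UV.
have [x Kx] : \bigcap_(i in D) (K i `\` (U `|` V)) !=set0.
  apply: compact_directed_bigcap_neq0 => //.
  - move=> i j Di Dj; have [l Dl Kl] := dirK i j Di Dj.
    by exists l => // z [/Kl [Kiz Kjz] UVz].
  - move=> i Di; rewrite setDE; apply: closedI (clK i Di) _.
    exact/open_closedC/openU.
have [i Di] := D0; have [_ UVx] := Kx i Di.
by apply: UVx; apply: KUV => j Dj; have [] := Kx j Dj.
Qed.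

End directed_intersections.

Section sublevel_sets.
Variables (R : realType) (k : nat) (M : topologicalType) (phi : M -> 'rV[R]_k).

Lemma closed_sublevel (t : 'rV[R]_k) : continuous phi -> closed (sublevel phi t).
Proof.
move=> cphi.
have -> : sublevel phi t =
    \bigcap_(i in [set: 'I_k]) ((fun x => phi x ord0 i) @^-1` [set r | r <= t ord0 i]).
  by apply/seteqP; split => [x Hx i _ | x Hx i]; exact: Hx.
apply: closed_bigI => i _; apply: (proj1 (continuous_closedP _)); last exact: closed_le.
move=> x; exact: (continuous_comp (cphi x) (@coord_continuous R 1 k ord0 i (phi x))).
Qed.

Lemma sublevelS (s t : 'rV[R]_k) :
  (forall i, s ord0 i <= t ord0 i) -> sublevel phi s `<=` sublevel phi t.
Proof. by move=> st x Sx i; exact: le_trans (Sx i) (st i). Qed.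

Lemma bigcap_sublevel_shift (t : 'rV[R]_k) :
  \bigcap_(e in [set e : R | 0 < e]) sublevel phi (t + const_mx e) = sublevel phi t.
Proof.
apply/seteqP; split => [x Sx i | x Sx e e0]; last first.
  by apply: sublevelS x Sx => i; rewrite !mxE lerDl ltW.
by apply/ler_addgt0Pr => e e0; have := Sx e e0 i; rewrite !mxE.
Qed.

End sublevel_sets.

Theorem lemma5p1 (R : realType) (k : nat) (M : topologicalType)
    (phi : M -> 'rV[R]_k) (y : 'rV[R]_k) (P Q : M) :
  M ->
  compact [set: M] ->
  locally_connected_space M ->
  hausdorff_space M ->
  continuous phi ->
  (forall eps : R, 0 < eps ->
     sublevel_connected phi (y + const_mx eps) P Q) ->
  sublevel_connected phi y P Q.
Proof.
move=> _ cM _ hM cphi connPQ.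
pose K e := connected_component (sublevel phi (y + const_mx e)) P.
have KPQ e : 0 < e -> K e P /\ K e Q.
  move=> /connPQ [C [Cc CS CP CQ]].
  by split; apply: (connected_component_max CP CS Cc).
exists (\bigcap_(e in [set e : R | 0 < e]) K e); split.
- apply: connected_bigcap_directed => //.
  + by exists 1; rewrite /= ltr01.
  + move=> e1 e2 e1_gt0 e2_gt0; exists (Num.min e1 e2); first by rewrite /= lt_min e1_gt0.
    move=> z Kz; split; apply: connected_componentS Kz; apply: sublevelS => i;
      by rewrite !mxE lerD2l ge_min lexx ?orbT.
  + by move=> e _; apply: component_closed; exact: closed_sublevel.
  + by move=> e _; exact: component_connected.
- rewrite -bigcap_sublevel_shift; apply: subset_bigcap => e _.
  exact: connected_component_sub.
- by move=> e /KPQ [].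
- by move=> e /KPQ [].
Qed.
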